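(* Let $G$ be a connected finite simple graph on the vertex set $\{1,\ldots,d\}$ with $d\ge 2$. Then the symmetric edge polytope $\mathcal{P}^{\pm}_G$, regarded as a Fano polytope in $\mathbb{R}^{d-1}$ via the identification $\phi:\mathbb{R}^{d-1}\to\mathcal{H}$, cannot split if and only if $G$ is 2-connected.
   Context: For an edge $e=\{i,j\}$ set $\sigma(e)=\mathbf{e}_i-\mathbf{e}_j\in\mathbb{R}^d$; $\mathcal{P}^{\pm}_G$ is the convex hull of $\{\pm\sigma(e): e\in E(G)\}$. It lies in $\mathcal{H}=\{x: x_1+\cdots+x_d=0\}$, identified with $\mathbb{R}^{d-1}$ via $\phi(y_1,\ldots,y_{d-1})=(y_1,\ldots,y_{d-1},-(y_1+\cdots+y_{d-1}))$; it is then a Fano polytope (a full-dimensional integral polytope whose only interior lattice point is the origin). A Fano polytope $\mathcal{P}\subset\mathbb{R}^D$ splits if, after a unimodular change of lattice coordinates (an element of $GL_D(\mathbb{Z})$, e.g. a renumbering of coordinates), there are $D_1,D_2\ge1$ with $D_1+D_2=D$ and Fano polytopes $\mathcal{P}_1\subset\mathbb{R}^{D_1}$, $\mathcal{P}_2\subset\mathbb{R}^{D_2}$ such that $\mathcal{P}=\operatorname{conv}(\{(a,\mathbf{0}):a\in\mathcal{P}_1\}\cup\{(\mathbf{0},b):b\in\mathcal{P}_2\})$. A connected graph $G$ is 2-connected if for every vertex $i$ the induced subgraph on $V(G)\setminus\{i\}$ is connected. *)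

From HB Require Import structures.
From mathcomp Require Import all_boot all_order all_algebra.
From mathcomp Require Import reals.
Set Implicit Arguments. Unset Strict Implicit. Unset Printing Implicit Defensive.
Import Order.TTheory GRing.Theory Num.Theory.
Local Open Scope ring_scope.

Section Defs.
Variable R : realType.

Definition convhull n (A : 'rV[R]_n -> Prop) : 'rV[R]_n -> Prop :=
  fun x => exists (k : nat) (p : 'I_k -> 'rV[R]_n) (w : 'I_k -> R),
    (forall i, A (p i)) /\ (forall i, 0 <= w i) /\ (\sum_i w i = 1) /\
    x = \sum_i w i *: p i.

Definition lattice_pt n (x : 'rV[R]_n) : Prop := forall i, exists z : int, x 0 i = z%:~R.

(* topological interior (w.r.t. the sup-norm, i.e. the usual topology of R^n) *)
Definition interior_pt n (P : 'rV[R]_n -> Prop) (x : 'rV[R]_n) : Prop :=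
  exists2 eps : R, 0 < eps & forall y : 'rV[R]_n, (forall i, `|y 0 i - x 0 i| < eps) -> P y.

Definition integral_polytope n (P : 'rV[R]_n -> Prop) : Prop :=
  exists s : seq 'rV[R]_n, (forall v, v \in s -> lattice_pt v) /\
    (forall x, P x <-> convhull (fun v => v \in s) x).

Definition fano n (P : 'rV[R]_n -> Prop) : Prop :=
  integral_polytope P /\ (exists x, interior_pt P x) /\
  (forall x, lattice_pt x -> (interior_pt P x <-> x = 0)).

(* unimodular change of lattice coordinates: x |-> x *m U with U in GL_n(Z) *)
Definition unimodular n (U : 'M[int]_n) : Prop := `|\det U| = 1.

Definition splits n (P : 'rV[R]_n -> Prop) : Prop :=
  exists (U : 'M[int]_n) (n1 n2 : nat) (e : (n1 + n2)%N = n)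
         (P1 : 'rV[R]_n1 -> Prop) (P2 : 'rV[R]_n2 -> Prop),
    unimodular U /\ (0 < n1)%N /\ (0 < n2)%N /\ fano P1 /\ fano P2 /\
    (forall y, (exists2 x, P x & y = x *m map_mx intr U) <->
       convhull (fun z => (exists2 a, P1 a & z = castmx (erefl 1%N, e) (row_mx a 0)) \/
                          (exists2 b, P2 b & z = castmx (erefl 1%N, e) (row_mx 0 b))) y).

Definition sigma d (i j : 'I_d) : 'rV[R]_d := delta_mx 0 i - delta_mx 0 j.

(* k-th coordinate of y (0 if out of range) *)
Definition coord_nat n (y : 'rV[R]_n) (k : nat) : R :=
  if insub k is Some j then y 0 j else 0.

Definition phi d (y : 'rV[R]_d.-1) : 'rV[R]_d :=
  \row_(i < d) (if (i < d.-1)%N then coord_nat y i else - \sum_j y 0 j).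

Definition sym_edge_polytope d (E : rel 'I_d) : 'rV[R]_d -> Prop :=
  convhull (fun x => exists i j, E i j /\ (x = sigma i j \/ x = - sigma i j)).

Definition sym_edge_polytope_H d (E : rel 'I_d) : 'rV[R]_d.-1 -> Prop :=
  fun y => sym_edge_polytope E (phi y).

End Defs.

(* finite simple graphs on {1..d} = 'I_d : symmetric irreflexive relations *)
Definition simple_graph d (E : rel 'I_d) : Prop := symmetric E /\ irreflexive E.

Definition connected_graph d (E : rel 'I_d) : Prop := forall i j, connect E i j.

Definition delete_vertex d (E : rel 'I_d) (v : 'I_d) : rel 'I_d :=
  fun a b => [&& E a b, a != v & b != v].

Definition two_connected d (E : rel 'I_d) : Prop :=
  connected_graph E /\
  forall v i j, i != v -> j != v -> connect (delete_vertex E v) i j.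

(* Read in the unimodular coordinates of a splitting, every edge vector sigma(p,q)
   lies in one of the two summands: it is the unique point of the polytope maximising
   x_p - x_q, so it must be one of the points averaged to obtain it.  Both summands
   receive edges because both are full-dimensional.  In a 2-connected graph some vertex v
   then carries edges va and vc of different kinds; closing them up by a path from a to c
   that avoids v gives a cycle whose edge vectors sum to zero, and regrouping that sum by
   kinds yields a vector of the hyperplane, with v-coordinate 1, in the kernels of both
   projections, which is absurd.
   Conversely, for a cut vertex v separating the other vertices into A and B, eliminating
   x_v through x_1 + ... + x_d = 0 and listing the coordinates of A before those of B is a
   unimodular change of coordinates that turns the polytope into the free sum of the
   polytopes of G[v + A] and G[v + B].  Each summand is Fano: its edge vectors are
   differences of 0/1 vectors, and paths to v put a multiple of every unit vector in it. *)

From HB Require Import structures.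
From mathcomp Require Import all_boot all_order all_algebra.
From mathcomp Require Import reals ring lra.
From Stdlib Require Import Classical.
Set Implicit Arguments. Unset Strict Implicit. Unset Printing Implicit Defensive.
Import Order.TTheory GRing.Theory Num.Theory.
Local Open Scope ring_scope.

Lemma split_lshift m n (i : 'I_m) : split (lshift n i) = inl i.
Proof. exact: (unsplitK (inl i)). Qed.

Lemma split_rshift m n (i : 'I_n) : split (rshift m i) = inr i.
Proof. exact: (unsplitK (inr i)). Qed.

Lemma connect_ind (T : finType) (e : rel T) (P : T -> T -> Prop) :
  (forall x, P x x) -> (forall x y z, e x y -> P y z -> P x z) ->
  forall x z, connect e x z -> P x z.
Proof.
move=> P_refl P_step x z /connectP[p]; elim: p x => [|y p IHp] x /=; first by move=> _ ->.
by move=> /andP[exy py] z_last; apply: P_step exy (IHp _ py z_last).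
Qed.

Lemma connect_neq_edge (T : finType) (e : rel T) x y :
  connect e x y -> x != y -> exists z, e x z.
Proof.
move=> /connectP[[|z p] /=]; first by move=> _ ->; rewrite eqxx.
by move=> /andP[exz _] _ _; exists z.
Qed.

(** * Convex hulls *)

Section ConvexHull.
Variables (R : realType) (n : nat).
Implicit Types (A B C : 'rV[R]_n -> Prop) (x y : 'rV[R]_n).

Definition convex_set C :=
  forall x y t, 0 <= t <= 1 -> C x -> C y -> C (t *: x + (1 - t) *: y).

Lemma convhull_mono A B : (forall y, A y -> B y) -> forall x, convhull A x -> convhull B x.
Proof.
move=> AB x [k [p [w [Ap hw]]]]; exists k, p, w.
by split=> [i|//]; apply/AB/Ap.
Qed.

Lemma convhull_mem A x : A x -> convhull A x.
Proof.
move=> Ax; exists 1%N, (fun=> x), (fun=> 1).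
by rewrite !big_ord1 scale1r; split=> // _; split=> // _; apply: ler01.
Qed.

Lemma convhull_convex A : convex_set (convhull A).
Proof.
move=> _ _ t /andP[t0 t1] [k1 [p1 [w1 [A1 [w1_ge0 [w1_sum ->]]]]]]
  [k2 [p2 [w2 [A2 [w2_ge0 [w2_sum ->]]]]]].
exists (k1 + k2)%N, (fun i => match split i with inl a => p1 a | inr b => p2 b end),
  (fun i => match split i with inl a => t * w1 a | inr b => (1 - t) * w2 b end).
split; first by move=> i; case: split.
split; first by move=> i; case: split => a; rewrite mulr_ge0 ?subr_ge0.
rewrite !big_split_ord /=; split.
  rewrite [X in X + _](eq_bigr (fun i => t * w1 i)) => [|i _]; last by rewrite split_lshift.
  rewrite [X in _ + X](eq_bigr (fun i => (1 - t) * w2 i)) => [|i _]; last by rewrite split_rshift.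
  by rewrite -!mulr_sumr w1_sum w2_sum !mulr1 addrC subrK.
rewrite [X in _ = X + _](eq_bigr (fun i => t *: (w1 i *: p1 i))) => [|i _];
  last by rewrite split_lshift scalerA.
rewrite [X in _ = _ + X](eq_bigr (fun i => (1 - t) *: (w2 i *: p2 i))) => [|i _];
  last by rewrite split_rshift scalerA.
by rewrite -!scaler_sumr.
Qed.

Lemma convhull_sub_convex C : convex_set C -> forall x, convhull C x -> C x.
Proof.
move=> C_convex x [k [p [w [Cp [w_ge0 [w_sum ->]]]]]].
elim: k p w Cp w_ge0 w_sum => [|k IHk] p w Cp w_ge0 w_sum.
  by move: w_sum; rewrite big_ord0 => /eqP; rewrite eq_sym oner_eq0.
move: w_sum; rewrite !big_ord_recr /=.
set W := \sum_(i < k) w (widen_ord (leqnSn k) i) => w_sum.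
have W_ge0 : 0 <= W by apply: sumr_ge0.
have w_last : w ord_max = 1 - W by rewrite -w_sum addrC addrK.
have [W0|W_neq0] := eqVneq W 0.
  have w0 i : w (widen_ord (leqnSn k) i) = 0.
    exact: (psumr_eq0P (P := xpredT) (fun i _ => w_ge0 _) W0).
  by rewrite big1 ?add0r => [|i _]; rewrite ?w0 ?scale0r // w_last W0 subr0 scale1r.
have W_unit : W \is a GRing.unit by rewrite unitfE.
have -> : \sum_(i < k) w (widen_ord (leqnSn k) i) *: p (widen_ord (leqnSn k) i) =
    W *: \sum_(i < k) (w (widen_ord (leqnSn k) i) / W) *: p (widen_ord (leqnSn k) i).
  by rewrite scaler_sumr; apply: eq_bigr => i _; rewrite scalerA mulrCA divrr ?mulr1.
rewrite w_last; apply: C_convex; last exact: Cp.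
- by rewrite W_ge0 -subr_ge0 -w_last w_ge0.
- apply: IHk => [i|i|]; [exact: Cp | exact: divr_ge0 | by rewrite -mulr_suml divrr].
Qed.

Lemma convhull_idem A x : convhull (convhull A) x -> convhull A x.
Proof. exact: convhull_sub_convex (@convhull_convex A) x. Qed.

Lemma convhull_eq0 A x : (forall y, A y -> y = 0) -> convhull A x -> x = 0.
Proof.
move=> A0 [k [p [w [Ap [_ [_ ->]]]]]].
by apply: big1 => i _; rewrite (A0 _ (Ap i)) scaler0.
Qed.

Section ScalarFunctional.
Variable l : 'rV[R]_n -> R.
Hypothesis l_scalar : scalar l.

Lemma scalar_sum k (w : 'I_k -> R) p : l (\sum_i w i *: p i) = \sum_i w i * l (p i).
Proof.
have l0 : l 0 = 0 by have := l_scalar (-1) 0 0; rewrite scaleN1r mulN1r oppr0 addr0 addNr.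
have lD x y : l (x + y) = l x + l y by have := l_scalar 1 x y; rewrite scale1r mul1r.
rewrite (big_morph l lD l0); apply: eq_bigr => i _.
by rewrite -[w i *: p i]addr0 l_scalar l0 addr0.
Qed.

Variables (A : 'rV[R]_n -> Prop) (M : R).
Hypothesis l_le : forall y, A y -> l y <= M.

Lemma scalar_convhull_le x : convhull A x -> l x <= M.
Proof.
move=> [k [p [w [Ap [w_ge0 [w_sum ->]]]]]]; rewrite scalar_sum.
rewrite -[M]mul1r -w_sum mulr_suml; apply: ler_sum => i _.
by rewrite ler_wpM2l ?l_le.
Qed.

Lemma scalar_convhull_gap k (w : 'I_k -> R) p : (forall i, A (p i)) ->
  (forall i, 0 <= w i) -> \sum_i w i = 1 -> l (\sum_i w i *: p i) = M ->
  forall i, w i * (M - l (p i)) = 0.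
Proof.
move=> Ap w_ge0 w_sum; rewrite scalar_sum => l_max.
have gap_sum : \sum_i w i * (M - l (p i)) = 0.
  under eq_bigr do rewrite mulrBr.
  by rewrite sumrB -mulr_suml w_sum mul1r l_max subrr.
move=> i; apply: (psumr_eq0P (P := xpredT) _ gap_sum) => // j _.
by rewrite mulr_ge0 ?subr_ge0 ?l_le.
Qed.

Lemma scalar_convhull_max x : convhull A x -> l x = M -> exists2 y, A y & l y = M.
Proof.
move=> [k [p [w [Ap [w_ge0 [w_sum ->]]]]]] l_max.
have gap := scalar_convhull_gap Ap w_ge0 w_sum l_max.
have [i w_i] : exists i, w i != 0.
  apply: NNPP => w0; move: w_sum; rewrite big1 => [/eqP|i _]; first by rewrite eq_sym oner_eq0.
  by apply/eqP/negPn/negP => w_i; apply: w0; exists i.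
exists (p i) => //; apply/esym/eqP.
by have /eqP := gap i; rewrite mulf_eq0 (negbTE w_i) subr_eq0.
Qed.

Lemma scalar_convhull_argmax x y0 : (forall y, A y -> l y = M -> y = y0) ->
  convhull A x -> l x = M -> x = y0.
Proof.
move=> uniq_max [k [p [w [Ap [w_ge0 [w_sum ->]]]]]] l_max.
have gap := scalar_convhull_gap Ap w_ge0 w_sum l_max.
rewrite -[y0]scale1r -w_sum scaler_suml; apply: eq_bigr => i _.
have /eqP := gap i; rewrite mulf_eq0 => /orP[/eqP->|]; first by rewrite !scale0r.
by rewrite subr_eq0 => /eqP/esym/(uniq_max _ (Ap i)) ->.
Qed.

End ScalarFunctional.
End ConvexHull.

Section LinearImage.
Variables (R : realType) (n m : nat) (f : 'rV[R]_n -> 'rV[R]_m).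
Hypothesis f_linear : linear f.

Lemma linfun0 : f 0 = 0.
Proof. by have := f_linear (-1) 0 0; rewrite !scaleN1r oppr0 addr0 addNr. Qed.

Lemma linfunD x y : f (x + y) = f x + f y.
Proof. by have := f_linear 1 x y; rewrite !scale1r. Qed.

Lemma linfunN x : f (- x) = - f x.
Proof. by rewrite -[- x]addr0 -scaleN1r f_linear linfun0 addr0 scaleN1r. Qed.

Lemma linfun_sum k (w : 'I_k -> R) p : f (\sum_i w i *: p i) = \sum_i w i *: f (p i).
Proof.
rewrite (big_morph f linfunD linfun0); apply: eq_bigr => i _.
by rewrite -[w i *: p i]addr0 f_linear linfun0 addr0.
Qed.

Lemma convhull_linear (A : 'rV[R]_n -> Prop) x :
  convhull A x -> convhull (fun z => exists2 y, A y & z = f y) (f x).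
Proof.
move=> [k [p [w [Ap [w_ge0 [w_sum ->]]]]]]; exists k, (f \o p), w.
by rewrite linfun_sum; split=> [i|]; [exists (p i) | split].
Qed.

End LinearImage.

(** * Fano polytopes spanned by differences of 0/1 vectors *)

Section UnitCube.
Variables (R : realType) (n : nat).
Implicit Types (P : 'rV[R]_n -> Prop) (x : 'rV[R]_n).

Lemma interior_cube_lt1 P x : (forall y k, P y -> `|y 0 k| <= 1) ->
  interior_pt P x -> forall k, `|x 0 k| < 1.
Proof.
move=> P_cube [eps eps_gt0 P_ball] k.
have Px : P x by apply: P_ball => i; rewrite subrr normr0.
have P_dilate : P ((1 + eps / 2) *: x).
  apply: P_ball => i; rewrite mxE mulrDl mul1r addrAC subrr add0r normrM ger0_norm; last lra.
  apply: (le_lt_trans (y := eps / 2)); last lra.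
  by rewrite -[leRHS]mulr1; apply: ler_wpM2l (P_cube _ i Px); lra.
have := P_cube _ k P_dilate; rewrite mxE normrM ger0_norm; last lra.
move=> dilate_le1; rewrite ltNge; apply/negP => x_ge1.
have : eps / 2 * 1 <= eps / 2 * `|x 0 k| by apply: ler_wpM2l x_ge1; lra.
lra.
Qed.

Lemma lattice_pt_norm_lt1 x : lattice_pt x -> (forall k, `|x 0 k| < 1) -> x = 0.
Proof.
move=> x_int x_lt1; apply/rowP => k; rewrite mxE.
have [z xz] := x_int k; have := x_lt1 k; rewrite xz => z_lt1.
apply/eqP; apply: contraTT z_lt1 => z_neq0.
by rewrite -leNgt norm_intr_ge1 ?intr_int.
Qed.

Lemma fano_exists_neq0 P : fano P -> (0 < n)%N -> exists2 a, P a & a != 0.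
Proof.
move=> [_ [[x [eps eps_gt0 P_ball]] _]] n_gt0; pose k := Ordinal n_gt0.
have Px : P x by apply: P_ball => i; rewrite subrr normr0.
have [x0|] := eqVneq x 0; last by exists x.
exists (x + (eps / 2) *: delta_mx 0 k).
  apply: P_ball => i; rewrite !mxE eqxx addrAC subrr add0r normrM ger0_norm; last lra.
  by case: (i == k); rewrite ?mulr1 ?mulr0 ?normr1 ?normr0; lra.
apply/negP => /eqP/rowP/(_ k); rewrite x0 !mxE !eqxx add0r mulr1 => h; lra.
Qed.

End UnitCube.

Section DiffPolytope.
Variables (R : realType) (m : nat) (T : finType) (F : rel T) (b : T -> 'rV[R]_m).

Definition diff_polytope : 'rV[R]_m -> Prop :=
  convhull (fun g => exists u w, F u w /\ g = b u - b w).
Local Notation Q := diff_polytope.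

Hypothesis F_sym : symmetric F.
Hypothesis b_01 : forall u k, b u 0 k = 0 \/ b u 0 k = 1.
Hypothesis b_span : forall k, exists u w, b u - b w = delta_mx 0 k /\ connect F u w.
Hypothesis m_gt0 : (0 < m)%N.

Lemma diff_polytope_mem u w : F u w -> Q (b u - b w).
Proof. by move=> Fuw; apply: convhull_mem; exists u, w. Qed.

Lemma diff_polytope_convex x y t : 0 <= t <= 1 -> Q x -> Q y -> Q (t *: x + (1 - t) *: y).
Proof. exact: convhull_convex. Qed.

Lemma diff_polytope_cube x k : Q x -> `|x 0 k| <= 1.
Proof.
have edge_cube g : (exists u w, F u w /\ g = b u - b w) -> -1 <= g 0 k <= 1.
  move=> [u [w [_ ->]]]; rewrite !mxE.
  by case: (b_01 u k) => ->; case: (b_01 w k) => ->; apply/andP; split; lra.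
have coord_scalar : scalar (fun y : 'rV[R]_m => y 0 k) by move=> a y z; rewrite !mxE.
have ncoord_scalar : scalar (fun y : 'rV[R]_m => - y 0 k).
  by move=> a y z; rewrite !mxE mulrN opprD.
move=> Qx; rewrite ler_norml lerNl; apply/andP; split.
  by apply: (scalar_convhull_le ncoord_scalar _ Qx) => g /edge_cube/andP[]; lra.
by apply: (scalar_convhull_le coord_scalar _ Qx) => g /edge_cube/andP[].
Qed.

Lemma diff_polytope_oppr x : Q x -> Q (- x).
Proof.
have opp_linear : linear (fun y : 'rV[R]_m => - y) by move=> a y z; rewrite opprD scalerN.
move=> /(convhull_linear opp_linear); apply: convhull_mono => _ [_ [u [w [Fuw ->]]] ->].
by exists w, u; rewrite F_sym opprB.
Qed.

Lemma diff_polytope0 : Q 0.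
Proof.
have [u [w [uw_delta uw_connect]]] := b_span (Ordinal m_gt0).
have [z Fuz] : exists z, F u z.
  apply: connect_neq_edge uw_connect _; apply/eqP => uw; move: uw_delta.
  rewrite uw subrr => /rowP/(_ (Ordinal m_gt0)).
  by rewrite !mxE eqxx => /eqP; rewrite eq_sym oner_eq0.
have Qg := diff_polytope_mem Fuz.
have -> : 0 = 2^-1 *: (b u - b z) + (1 - 2^-1) *: - (b u - b z) :> 'rV[R]_m.
  by rewrite (_ : 1 - 2^-1 = 2^-1 :> R) ?scalerN ?subrr //; field.
by apply: (diff_polytope_convex _ Qg (diff_polytope_oppr Qg)); apply/andP; split; lra.
Qed.

Lemma diff_polytope_connect u w :
  connect F u w -> exists N : nat, Q (N.+1%:R^-1 *: (b u - b w)).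
Proof.
move: u w; apply: connect_ind.
  by move=> x; exists 0%N; rewrite subrr scaler0; apply: diff_polytope0.
move=> x y z Fxy [N QN]; exists N.+1.
(* average the edge [x, y] with weight 1/(N+2) against the point of the path [y, z] *)
set s : R := N.+2%:R.
have s_gt1 : 1 < s by rewrite ltr1n.
have N1E : N.+1%:R = s - 1 by rewrite /s -[N.+2]addn1 natrD addrK.
have := diff_polytope_convex (t := s^-1) _ (diff_polytope_mem Fxy) QN.
rewrite N1E scalerA (_ : (1 - s^-1) * (s - 1)^-1 = s^-1); last first.
  by field; apply/andP; split; apply/eqP; lra.
rewrite -scalerDr addrA subrK; apply; apply/andP; split; [rewrite invr_ge0 | rewrite invf_le1]; lra.
Qed.

Lemma diff_polytope_scale v t s : 0 < t -> Q (t *: v) -> `|s| <= t -> Q (s *: v).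
Proof.
move=> t_gt0 Qtv s_le.
have Q_pos r : 0 <= r <= t -> Q (r *: v).
  move=> /andP[r_ge0 r_le]; have := diff_polytope_convex (t := r / t) _ Qtv diff_polytope0.
  rewrite scaler0 addr0 scalerA mulrVK ?unitfE ?gt_eqF //; apply.
  by apply/andP; split; [rewrite divr_ge0 // ltW | rewrite ler_pdivrMr ?mul1r].
have [s_ge0|s_lt0] := leP 0 s; first by apply: Q_pos; rewrite s_ge0 -(ger0_norm s_ge0).
rewrite -[s]opprK scaleNr; apply/diff_polytope_oppr/Q_pos.
by rewrite oppr_ge0 ltW //= -(ltr0_norm s_lt0).
Qed.

Lemma diff_polytope_axes : exists2 t, 0 < t & forall k, Q (t *: delta_mx 0 k).
Proof.
suff [t t_gt0 Qt] : exists2 t, 0 < t & forall k, k \in enum 'I_m -> Q (t *: delta_mx 0 k).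
  by exists t => // k; apply: Qt; rewrite mem_enum.
elim: (enum 'I_m) => [|k ks [t t_gt0 Qt]]; first by exists 1.
have [u [w [uw_delta uw_connect]]] := b_span k.
have [N QN] := diff_polytope_connect uw_connect; rewrite uw_delta in QN.
have N_gt0 : 0 < N.+1%:R^-1 :> R by rewrite invr_gt0 ltr0n.
exists (Num.min t N.+1%:R^-1); first by rewrite lt_min t_gt0 N_gt0.
have min_ge0 : 0 <= Num.min t N.+1%:R^-1 by rewrite le_min !ltW.
move=> j; rewrite in_cons => /orP[/eqP->|j_ks].
  by apply: (diff_polytope_scale N_gt0 QN); rewrite ger0_norm // ge_min lexx orbT.
by apply: (diff_polytope_scale t_gt0 (Qt _ j_ks)); rewrite ger0_norm // ge_min lexx.
Qed.

Lemma diff_polytope_interior0 : interior_pt Q 0.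
Proof.
have [t t_gt0 Qt] := diff_polytope_axes.
have m_pos : 0 < m%:R :> R by rewrite ltr0n.
exists (t / m%:R) => [|y y_near]; first by rewrite divr_gt0.
(* y is the barycentre of the points m y_k e_k, each of which lies in Q *)
rewrite (row_sum_delta y).
have -> : \sum_(j < m) y 0 j *: delta_mx (0 : 'I_1) j =
    \sum_(j < m) m%:R^-1 *: ((m%:R * y 0 j) *: delta_mx (0 : 'I_1) j).
  by apply: eq_bigr => j _; rewrite scalerA mulrA mulVf ?mul1r // gt_eqF.
apply: convhull_idem.
exists m, (fun j => (m%:R * y 0 j) *: delta_mx 0 j), (fun=> m%:R^-1); split.
  move=> j; apply: (diff_polytope_scale t_gt0 (Qt j)).
  have := y_near j; rewrite mxE subr0 normrM ger0_norm ?ler0n // => /ltW.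
  by rewrite ler_pdivlMr // mulrC.
split; first by move=> j; rewrite invr_ge0 ler0n.
by rewrite sumr_const card_ord -[_ *+ _]mulr_natr mulVf // gt_eqF.
Qed.

Lemma diff_polytope_fano : fano Q.
Proof.
split.
  exists [seq b p.1 - b p.2 | p <- enum [pred p : T * T | F p.1 p.2]]; split.
    move=> _ /mapP[[u w] _ ->] k; rewrite !mxE.
    case: (b_01 u k) => ->; case: (b_01 w k) => ->.
    - by exists 0; rewrite subrr.
    - by exists (-1); rewrite sub0r.
    - by exists 1; rewrite subr0.
    - by exists 0; rewrite subrr.
  move=> x; split; apply: convhull_mono.
    by move=> _ [u [w [Fuw ->]]]; apply/mapP; exists (u, w) => //; rewrite mem_enum.
  by move=> g /mapP[[u w]]; rewrite mem_enum => Fuw ->; exists u, w.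
split; first by exists 0; apply: diff_polytope_interior0.
move=> x x_lattice; split=> [x_interior|->]; last exact: diff_polytope_interior0.
exact/(lattice_pt_norm_lt1 x_lattice)/(interior_cube_lt1 diff_polytope_cube x_interior).
Qed.

End DiffPolytope.

(** * Symmetric edge polytopes *)

Section HyperplaneCoordinates.
Variables (R : realType) (n : nat).
Local Notation phi := (@phi R n.+1).

Definition unphi (w : 'rV[R]_n.+1) : 'rV[R]_n := \row_k w 0 (widen_ord (leqnSn n) k).

Lemma coord_natE (y : 'rV[R]_n) (k : 'I_n) : coord_nat y k = y 0 k.
Proof. by rewrite /coord_nat valK. Qed.

Lemma phiK : cancel phi unphi.
Proof. by move=> y; apply/rowP => k; rewrite !mxE /= ltn_ord coord_natE. Qed.

Lemma unphiK (w : 'rV[R]_n.+1) : \sum_u w 0 u = 0 -> phi (unphi w) = w.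
Proof.
rewrite big_ord_recr /= => w_sum; apply/rowP => i; rewrite mxE.
case: ifP => [i_lt|/negbT].
  rewrite /coord_nat insubT mxE; congr (w 0 _); exact: val_inj.
rewrite -leqNgt => i_ge.
have -> : i = ord_max by apply: val_inj; apply/eqP; rewrite /= eqn_leq -ltnS ltn_ord.
move/eqP: w_sum; rewrite addrC addr_eq0 => /eqP ->; congr (- _).
by apply: eq_bigr => j _; rewrite mxE.
Qed.

Lemma phi_linear : linear phi.
Proof.
move=> a x y; apply/rowP => i; rewrite !mxE; case: ifP => _.
  by rewrite /coord_nat; case: insub => [j|]; rewrite ?mxE // mulr0 addr0.
under eq_bigr do rewrite !mxE.
by rewrite big_split /= -mulr_sumr opprD mulrN.
Qed.

Lemma unphi_linear : linear unphi.
Proof. by move=> a x y; apply/rowP => k; rewrite !mxE. Qed.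

End HyperplaneCoordinates.

Section EdgeVectors.
Variables (R : realType) (d : nat).
Implicit Types (p q u : 'I_d) (E : rel 'I_d).
Local Notation sigma := (@sigma R d).

Lemma sigmaE p q u : sigma p q 0 u = (u == p)%:R - (u == q)%:R.
Proof. by rewrite !mxE eqxx. Qed.

Lemma sigmaN p q : sigma q p = - sigma p q.
Proof. by rewrite /sigma opprB. Qed.

Lemma sum_sigma p q : \sum_u sigma p q 0 u = 0.
Proof.
have indicator_sum i : \sum_u ((u == i)%:R : R) = 1.
  by rewrite (bigD1 i) //= eqxx big1 ?addr0 // => u /negbTE ->.
under eq_bigr do rewrite sigmaE.
by rewrite sumrB !indicator_sum subrr.
Qed.

Lemma sigma_coord_bounds p q u : -1 <= sigma p q 0 u <= 1.
Proof. by rewrite sigmaE; case: eqP => _; case: eqP => _ /=; apply/andP; split; lra. Qed.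

Lemma sigma_coord_le0 p q u : u != p -> sigma p q 0 u <= 0.
Proof. by rewrite sigmaE => /negbTE -> /=; case: eqP => _ /=; lra. Qed.

Lemma sigma_coord_ge0 p q u : u != q -> 0 <= sigma p q 0 u.
Proof. by rewrite sigmaE => /negbTE -> /=; case: eqP => _ /=; lra. Qed.

Lemma sigma_exposed p q a c : sigma p q 0 a - sigma p q 0 c <= 2 /\
  (sigma p q 0 a - sigma p q 0 c = 2 -> a = p /\ c = q).
Proof.
have /andP[a_geN1 a_le1] := sigma_coord_bounds p q a.
have /andP[c_geN1 c_le1] := sigma_coord_bounds p q c.
split=> [|diff2]; first lra.
split; apply/eqP/negPn/negP; [move=> /(sigma_coord_le0 q) | move=> /(sigma_coord_ge0 p)]; lra.
Qed.

Lemma sym_edge_generator_sigma E g :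
  (exists i j, E i j /\ (g = sigma i j \/ g = - sigma i j)) -> exists i j, g = sigma i j.
Proof.
move=> [i [j [_ [-> | ->]]]]; first by exists i, j.
by exists j, i; rewrite sigmaN opprK.
Qed.

Section SymEdgePolytope.
Variable E : rel 'I_d.
Local Notation P := (@sym_edge_polytope R d E).

Lemma coord_diff_scalar p q : scalar (fun y : 'rV[R]_d => y 0 p - y 0 q).
Proof. by move=> a y z; rewrite !mxE; ring. Qed.

Lemma sym_edge_polytope_le2 p q x : P x -> x 0 p - x 0 q <= 2.
Proof.
move=> Px; apply: (scalar_convhull_le (coord_diff_scalar p q) _ Px).
by move=> g /sym_edge_generator_sigma[i [j ->]]; apply: (sigma_exposed i j p q).1.
Qed.

Lemma sym_edge_polytope_argmax p q x : P x -> x 0 p - x 0 q = 2 -> x = sigma p q.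
Proof.
move=> Px; apply: (scalar_convhull_argmax (coord_diff_scalar p q) _ _ Px).
  by move=> g /sym_edge_generator_sigma[i [j ->]]; apply: (sigma_exposed i j p q).1.
by move=> g /sym_edge_generator_sigma[i [j ->]] /(sigma_exposed i j p q).2[<- <-].
Qed.

Lemma sym_edge_polytope_linear_eq0 m (f : 'rV[R]_d -> 'rV[R]_m) x : linear f ->
  (forall p q, E p q -> f (sigma p q) = 0) -> P x -> f x = 0.
Proof.
move=> f_linear f_edge /(convhull_linear f_linear); apply: convhull_eq0.
move=> _ [_ [p [q [Epq [->|->]]]] ->]; first exact: f_edge.
by rewrite (linfunN f_linear) f_edge ?oppr0.
Qed.

End SymEdgePolytope.
End EdgeVectors.

(** * A splitting separates the edges *)

Section EdgeKernels.
Variables (R : realType) (n m1 m2 : nat) (E : rel 'I_n.+1).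
Variables (f1 : 'rV[R]_n.+1 -> 'rV[R]_m1) (f2 : 'rV[R]_n.+1 -> 'rV[R]_m2).
Hypotheses (E_sym : symmetric E) (E_irr : irreflexive E).
Hypotheses (f1_linear : linear f1) (f2_linear : linear f2).
Hypothesis kernels_meet : forall w : 'rV[R]_n.+1, \sum_u w 0 u = 0 -> f1 w = 0 -> f2 w = 0 -> w = 0.
Local Notation sigma := (@sigma R n.+1).
Hypothesis edge_kernels : forall p q, E p q -> f1 (sigma p q) = 0 \/ f2 (sigma p q) = 0.

Lemma edge_kernels_mixed_vertex : connected_graph E ->
    (exists p q, E p q /\ f1 (sigma p q) = 0) -> (exists p q, E p q /\ f2 (sigma p q) = 0) ->
  exists v a c, [/\ E v a, E v c, f1 (sigma v a) = 0 & f2 (sigma v c) = 0].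
Proof.
move=> E_conn [p1 [q1 [E1 f1_1]]] [p2 [q2 [E2 f2_2]]]; apply: NNPP => no_mixed.
pose in_ker1 u := exists a, E u a /\ f1 (sigma u a) = 0.
have in_ker1_connect x z : connect E x z -> in_ker1 x -> in_ker1 z.
  move: x z; apply: connect_ind => // x y z Exy IH [a [Exa f1xa]]; apply: IH.
  have [f1xy|f2xy] := edge_kernels Exy; last by case: no_mixed; exists x, a, y.
  by exists x; rewrite E_sym Exy sigmaN (linfunN f1_linear) f1xy oppr0.
have [a [E2a f1a]] := in_ker1_connect _ _ (E_conn p1 p2) (ex_intro _ q1 (conj E1 f1_1)).
by apply: no_mixed; exists p2, a, q2.
Qed.

Lemma edge_kernels_avoiding_path v x z : connect (delete_vertex E v) x z ->
  exists S1 S2, [/\ f1 S1 = 0, f2 S2 = 0, S1 0 v = 0, \sum_u S1 0 u = 0 & S1 + S2 = sigma x z].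
Proof.
move: x z; apply: connect_ind => [x|x y z /and3P[Exy xv yv] [S1 [S2 [f1S1 f2S2 S1v S1sum S12]]]].
  exists 0, 0; rewrite /sigma subrr addr0 (linfun0 f1_linear) (linfun0 f2_linear) mxE.
  by split=> //; rewrite big1 // => u _; rewrite mxE.
have sigma_xz : sigma x z = sigma x y + (S1 + S2) by rewrite S12 /sigma addrA subrK.
have [f1xy|f2xy] := edge_kernels Exy.
  exists (sigma x y + S1), S2; split=> //.
  - by rewrite (linfunD f1_linear) f1xy f1S1 addr0.
  - by rewrite mxE S1v addr0 sigmaE ![v == _]eq_sym (negbTE xv) (negbTE yv) subrr.
  - by under eq_bigr do rewrite mxE; rewrite big_split /= sum_sigma S1sum addr0.
  - by rewrite sigma_xz addrA.
exists S1, (sigma x y + S2); split=> //.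
  by rewrite (linfunD f2_linear) f2xy f2S2 addr0.
by rewrite sigma_xz addrCA.
Qed.

Lemma edge_kernels_not_two_connected :
  (exists p q, E p q /\ f1 (sigma p q) = 0) -> (exists p q, E p q /\ f2 (sigma p q) = 0) ->
  ~ two_connected E.
Proof.
move=> ker1_edge ker2_edge [E_conn E_2conn].
have [v [a [c [Eva Evc f1va f2vc]]]] := edge_kernels_mixed_vertex E_conn ker1_edge ker2_edge.
have a_neq_v : a != v by apply: contraTneq Eva => ->; rewrite E_irr.
have c_neq_v : c != v by apply: contraTneq Evc => ->; rewrite E_irr.
have [S1 [S2 [f1S1 f2S2 S1v S1sum S12]]] :=
  edge_kernels_avoiding_path (E_2conn v a c a_neq_v c_neq_v).
(* the cycle v -> a ~> c -> v splits sigma v a + S1 = - (S2 + sigma c v) into both kernels *)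
pose T := sigma v a + S1.
have T_opp : T = - (S2 + sigma c v).
  apply/eqP; rewrite -addr_eq0 addrA -(addrA _ S1) S12.
  by rewrite /sigma !addrA !subrK subrr.
have f1T : f1 T = 0 by rewrite (linfunD f1_linear) f1va f1S1 addr0.
have f2T : f2 T = 0.
  rewrite T_opp (linfunN f2_linear) (linfunD f2_linear) sigmaN (linfunN f2_linear).
  by rewrite f2vc f2S2 oppr0 !addr0 oppr0.
have T_sum : \sum_u T 0 u = 0.
  by under eq_bigr do rewrite mxE; rewrite big_split /= sum_sigma S1sum addr0.
have /rowP/(_ v) := kernels_meet T_sum f1T f2T.
by rewrite /T !mxE S1v !eqxx eq_sym (negbTE a_neq_v) /= subr0 addr0 => /eqP; rewrite oner_eq0.
Qed.

End EdgeKernels.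

Lemma unimodular_unitmx (R : numFieldType) n (U : 'M[int]_n) :
  unimodular U -> map_mx intr U \in (@unitmx R n).
Proof.
by move=> U_unimod; rewrite unitmxE unitfE det_map_mx -normr_eq0 -intr_norm U_unimod oner_eq0.
Qed.

Section SplittingSeparatesEdges.
Variables (R : realType) (n : nat) (E : rel 'I_n.+1).
Hypotheses (E_sym : symmetric E) (E_irr : irreflexive E).
Variables (U : 'M[int]_n) (n1 n2 : nat) (e : (n1 + n2)%N = n).
Variables (P1 : 'rV[R]_n1 -> Prop) (P2 : 'rV[R]_n2 -> Prop).
Hypotheses (U_unimod : unimodular U) (n1_gt0 : (0 < n1)%N) (n2_gt0 : (0 < n2)%N).
Hypotheses (P1_fano : fano P1) (P2_fano : fano P2).
Local Notation P := (sym_edge_polytope_H (R:=R) E).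
Local Notation phi := (@phi R n.+1).
Local Notation sigma := (@sigma R n.+1).
Local Notation U' := (map_mx intr U : 'M[R]_n).
Let summands (z : 'rV[R]_n) :=
  (exists2 a, P1 a & z = castmx (erefl 1%N, e) (row_mx a 0)) \/
  (exists2 b, P2 b & z = castmx (erefl 1%N, e) (row_mx 0 b)).
Hypothesis P_split : forall y, (exists2 x, P x & y = x *m U') <-> convhull summands y.

Let U_unit : U' \in unitmx := unimodular_unitmx R U_unimod.

Definition split_coords (w : 'rV[R]_n.+1) : 'rV[R]_(n1 + n2) :=
  castmx (erefl 1%N, esym e) (unphi w *m U').
Definition lcoords w := lsubmx (split_coords w).
Definition rcoords w := rsubmx (split_coords w).

Lemma split_coords_linear : linear split_coords.
Proof.
move=> a x y; rewrite /split_coords unphi_linear mulmxDl -scalemxAl.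
by apply/rowP => k; rewrite !(castmxE, mxE).
Qed.

Lemma lcoords_linear : linear lcoords.
Proof. by move=> a x y; rewrite /lcoords split_coords_linear; apply/rowP => k; rewrite !mxE. Qed.

Lemma rcoords_linear : linear rcoords.
Proof. by move=> a x y; rewrite /rcoords split_coords_linear; apply/rowP => k; rewrite !mxE. Qed.

Lemma split_coords_phi x : split_coords (phi x) = castmx (erefl 1%N, esym e) (x *m U').
Proof. by rewrite /split_coords phiK. Qed.

Lemma coords_eq0 (w : 'rV[R]_n.+1) : \sum_u w 0 u = 0 -> lcoords w = 0 -> rcoords w = 0 -> w = 0.
Proof.
move=> w_sum l0 r0.
have split0 : split_coords w = 0.
  by rewrite -[split_coords w]hsubmxK -/(lcoords w) -/(rcoords w) l0 r0 row_mx0.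
have : unphi w *m U' = 0.
  rewrite -[unphi w *m U'](castmxK (erefl 1%N) (esym e)) -/(split_coords w) split0.
  by apply/rowP => k; rewrite !(castmxE, mxE).
move=> /(congr1 (mulmx^~ (invmx U'))); rewrite mulmxK // mul0mx => unphi0.
by rewrite -(unphiK w_sum) unphi0 (linfun0 (@phi_linear R n)).
Qed.

Lemma summand_preimage z : summands z -> P (z *m invmx U') /\ z = z *m invmx U' *m U'.
Proof.
move=> z_summand; have [x Px ->] : exists2 x, P x & z = x *m U'.
  by apply/P_split; apply: convhull_mem.
by rewrite mulmxK.
Qed.

Lemma edge_in_summand p q : E p q -> lcoords (sigma p q) = 0 \/ rcoords (sigma p q) = 0.
Proof.
move=> Epq; have pq : p != q by apply: contraTneq Epq => ->; rewrite E_irr.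
set s := sigma p q; have phi_s : phi (unphi s) = s := unphiK (sum_sigma R p q).
have P_s : P (unphi s).
  by rewrite /sym_edge_polytope_H phi_s; apply: convhull_mem; exists p, q; split=> //; left.
pose l (z : 'rV[R]_n) := phi (z *m invmx U') 0 p - phi (z *m invmx U') 0 q.
have l_scalar : scalar l by move=> a y z; rewrite /l mulmxDl -scalemxAl phi_linear !mxE; ring.
have l_le z : summands z -> l z <= 2.
  by move=> /summand_preimage[Pz _]; exact: sym_edge_polytope_le2 Pz.
have : convhull summands (unphi s *m U') by apply/P_split; exists (unphi s).
move=> /(scalar_convhull_max l_scalar l_le)[|z z_summand l_z].
  by rewrite /l mulmxK // phi_s !sigmaE !eqxx [q == p]eq_sym (negbTE pq) /=; lra.
have [Pz zE] := summand_preimage z_summand.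
have z_s : z *m invmx U' = unphi s by rewrite -[LHS]phiK (sym_edge_polytope_argmax Pz l_z).
have s_coords : split_coords s = castmx (erefl 1%N, esym e) z by rewrite /split_coords -z_s -zE.
case: z_summand s_coords => [[a _ ->]|[b _ ->]]; rewrite castmx_comp castmx_id => s_coords.
  by right; rewrite /rcoords s_coords row_mxKr.
by left; rewrite /lcoords s_coords row_mxKl.
Qed.

Lemma exists_edge_lcoords0 : exists p q, E p q /\ lcoords (sigma p q) = 0.
Proof.
apply: NNPP => no_edge.
have r_edges p q : E p q -> rcoords (sigma p q) = 0.
  by move=> Epq; case: (edge_in_summand Epq) => // l0; case: no_edge; exists p, q.
have [b P2b b_neq0] := fano_exists_neq0 P2_fano n2_gt0.
have z_summand : summands (castmx (erefl 1%N, e) (row_mx 0 b)) by right; exists b.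
have [Px zE] := summand_preimage z_summand.
have := sym_edge_polytope_linear_eq0 rcoords_linear r_edges Px.
rewrite /rcoords split_coords_phi -zE castmx_comp castmx_id row_mxKr.
by move=> /eqP; rewrite (negbTE b_neq0).
Qed.

Lemma exists_edge_rcoords0 : exists p q, E p q /\ rcoords (sigma p q) = 0.
Proof.
apply: NNPP => no_edge.
have l_edges p q : E p q -> lcoords (sigma p q) = 0.
  by move=> Epq; case: (edge_in_summand Epq) => // r0; case: no_edge; exists p, q.
have [a P1a a_neq0] := fano_exists_neq0 P1_fano n1_gt0.
have z_summand : summands (castmx (erefl 1%N, e) (row_mx a 0)) by left; exists a.
have [Px zE] := summand_preimage z_summand.
have := sym_edge_polytope_linear_eq0 lcoords_linear l_edges Px.
rewrite /lcoords split_coords_phi -zE castmx_comp castmx_id row_mxKl.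
by move=> /eqP; rewrite (negbTE a_neq0).
Qed.

Lemma sym_edge_split_not_two_connected : ~ two_connected E.
Proof.
exact: (edge_kernels_not_two_connected E_sym E_irr lcoords_linear rcoords_linear coords_eq0
  edge_in_summand exists_edge_lcoords0 exists_edge_rcoords0).
Qed.

End SplittingSeparatesEdges.

Lemma splits_not_two_connected (R : realType) n (E : rel 'I_n.+1) :
  simple_graph E -> splits (sym_edge_polytope_H (R:=R) E) -> ~ two_connected E.
Proof.
move=> [E_sym E_irr] [U [n1 [n2 [e [P1 [P2 split_props]]]]]].
have [U_unimod [n1_gt0 [n2_gt0 [P1_fano [P2_fano P_split]]]]] := split_props.
exact: (sym_edge_split_not_two_connected E_sym E_irr U_unimod n1_gt0 n2_gt0
  P1_fano P2_fano P_split).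
Qed.

(** * A cut vertex yields a splitting *)

Definition induced_rel (T : finType) (e : rel T) (S : {set T}) : rel T :=
  [rel u w | [&& e u w, u \in S & w \in S]].

Lemma induced_rel_sym (T : finType) (e : rel T) S : symmetric e -> symmetric (induced_rel e S).
Proof. by move=> e_sym u w; rewrite /induced_rel /= e_sym [(u \in S) && _]andbC. Qed.

Section StarPolytope.
Variables (R : realType) (n : nat) (E : rel 'I_n.+1) (v x0 : 'I_n.+1) (X : {set 'I_n.+1}).
Hypotheses (E_sym : symmetric E) (E_conn : connected_graph E).
Hypotheses (v_notin_X : v \notin X) (x0_in_X : x0 \in X).
Hypothesis X_closed : forall x y, x \in X -> E x y -> y != v -> y \in X.
Local Notation G := (induced_rel E (v |: X)).

Definition star_label (u : 'I_n.+1) : 'rV[R]_#|X| :=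
  if u \in X then delta_mx 0 (enum_rank_in x0_in_X u) else 0.

Lemma star_labelE u k : star_label u 0 k = (enum_val k == u)%:R.
Proof.
rewrite /star_label; case: ifP => uX; rewrite mxE //=.
  have [->|k_neq] := eqVneq k (enum_rank_in x0_in_X u); first by rewrite enum_rankK_in ?eqxx.
  by case: eqP => // k_u; case/eqP: k_neq; rewrite -k_u enum_valK_in.
by case: eqP => // k_u; move: uX; rewrite -k_u enum_valP.
Qed.

Lemma connect_star_v x : x \in X -> connect G x v.
Proof.
have path_to_v y z : connect E y z -> y \in X -> z = v -> connect G y z.
  move: y z; apply: connect_ind => [y _ _|y w z Eyw IH yX zv]; first exact: connect0.
  have Gyw : w \in v |: X -> G y w by move=> wvX; rewrite /induced_rel /= Eyw wvX in_setU1 yX orbT.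
  have [wv|w_neq_v] := eqVneq w v.
    by move: Gyw; rewrite wv zv => Gyv; apply/connect1/Gyv/setU11.
  have wX := X_closed yX Eyw w_neq_v.
  by apply: connect_trans (connect1 (Gyw _)) (IH wX zv); rewrite in_setU1 wX orbT.
by move=> xX; apply: path_to_v (E_conn x v) xX (erefl v).
Qed.

Lemma star_polytope_fano : fano (diff_polytope G star_label).
Proof.
apply: diff_polytope_fano.
- exact: induced_rel_sym.
- by move=> u k; rewrite star_labelE; case: eqP; [right | left].
- move=> k; exists (enum_val k), v; split; last exact/connect_star_v/enum_valP.
  by rewrite /star_label enum_valP (negbTE v_notin_X) subr0 enum_valK_in.
- by apply/card_gt0P; exists x0.
Qed.

End StarPolytope.

Section DeleteVertexCoords.
Variables (n : nat) (v : 'I_n.+1) (f : 'I_n -> 'I_n.+1) (g : 'I_n.+1 -> 'I_n).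
Hypotheses (fK : cancel f g) (gK : forall u, u != v -> f (g u) = u) (f_neq_v : forall k, f k != v).

Lemma sum_neq_vertex (V : zmodType) (F : 'I_n.+1 -> V) : \sum_(u | u != v) F u = \sum_k F (f k).
Proof.
rewrite (reindex f); first by apply: eq_bigl => k; rewrite f_neq_v.
by exists g => [k _|u]; [rewrite fK | rewrite inE => /gK].
Qed.

(* The coordinate k of R^n is the coordinate k of R^(n+1); the last coordinate, n, is the one
   eliminated by [phi]. *)
Definition reorder_mx (Rg : pzRingType) : 'M[Rg]_n :=
  \matrix_(k, l) (if (f l < n)%N then ((k : nat) == f l)%:R else -1).

Definition reorder_inv_mx (Rg : pzRingType) : 'M[Rg]_n :=
  \matrix_(l, k) (if (k : nat) == v then -1 else ((f l : nat) == k)%:R).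

Lemma reorder_mxK (Rg : comPzRingType) : reorder_mx Rg *m reorder_inv_mx Rg = 1%:M.
Proof.
apply/matrixP => k k'; rewrite !mxE.
pose Uu (u : 'I_n.+1) : Rg := if (u < n)%N then ((k : nat) == u)%:R else -1.
pose Vu (u : 'I_n.+1) : Rg := if (k' : nat) == v then -1 else ((u : nat) == k')%:R.
under eq_bigr do rewrite !mxE -/(Uu _) -/(Vu _).
rewrite -(sum_neq_vertex (fun u => Uu u * Vu u)).
have Usum : \sum_u Uu u = 0.
  rewrite big_ord_recr /= (bigD1 k) //= big1 => [|u u_neq_k]; last first.
    rewrite /Uu /= ltn_ord; case: eqP => // ku; case/eqP: u_neq_k; exact: val_inj.
  by rewrite /Uu /= ltn_ord ltnn eqxx addr0 subrr.
rewrite /Vu; case: eqP => [k'v|k'_neq_v].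
  under eq_bigr do rewrite mulrN1.
  rewrite sumrN; move/eqP: Usum; rewrite (bigD1 v) //= addrC addr_eq0 => /eqP ->.
  by rewrite opprK /Uu -k'v ltn_ord.
have wk'_neq_v : widen_ord (leqnSn n) k' != v by apply/eqP => h; apply: k'_neq_v; rewrite -h.
rewrite (bigD1 (widen_ord (leqnSn n) k')) //= eqxx mulr1 big1 ?addr0.
  by rewrite /Uu /= ltn_ord.
move=> u /andP[_ u_neq]; case: eqP => [uk'|]; last by rewrite mulr0.
by case/eqP: u_neq; apply: val_inj; rewrite /= -uk'.
Qed.

Lemma reorder_mx_unimodular : unimodular (reorder_mx int).
Proof.
have /(congr1 determinant) := reorder_mxK int; rewrite det_mulmx det1 => /(congr1 absz).
rewrite abszM /= => /eqP; rewrite muln_eq1 => /andP[/eqP det_abs _].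
by rewrite /unimodular -abszE det_abs.
Qed.

Lemma reorder_mxE (R : realType) (x : 'rV[R]_n) :
  x *m map_mx intr (reorder_mx int) = \row_l (@phi R n.+1 x) 0 (f l).
Proof.
apply/rowP => l; rewrite !mxE.
case: ifP => fl_lt.
  rewrite (bigD1 (Ordinal fl_lt)) //= big1 => [|k k_neq]; last first.
    rewrite !mxE fl_lt; case: eqP => [k_fl|]; last by rewrite mulr0.
    by case/eqP: k_neq; apply: val_inj.
  by rewrite !mxE fl_lt eqxx mulr1 addr0 /coord_nat insubT.
by rewrite -sumrN; apply: eq_bigr => k _; rewrite !mxE fl_lt rmorphN1 mulrN1.
Qed.

End DeleteVertexCoords.

Section CutVertexSplitting.
Variables (R : realType) (n : nat) (E : rel 'I_n.+1).
Hypotheses (E_sym : symmetric E) (E_irr : irreflexive E) (E_conn : connected_graph E).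
Variables (v i j : 'I_n.+1) (A B : {set 'I_n.+1}).
Hypotheses (v_notin_A : v \notin A) (v_notin_B : v \notin B) (AB_disj : [disjoint A & B]).
Hypothesis AB_cover : forall u, u != v -> (u \in A) || (u \in B).
Hypotheses (i_in_A : i \in A) (j_in_B : j \in B).
Hypothesis AB_no_edge : forall x y, x \in A -> y \in B -> ~~ E x y.
Local Notation P := (sym_edge_polytope_H (R:=R) E).
Local Notation phi := (@phi R n.+1).
Local Notation sigma := (@sigma R n.+1).

Lemma A_closed x y : x \in A -> E x y -> y != v -> y \in A.
Proof.
move=> xA Exy /AB_cover/orP[//|yB].
by move: (AB_no_edge xA yB); rewrite Exy.
Qed.

Lemma B_closed x y : x \in B -> E x y -> y != v -> y \in B.
Proof.
move=> xB Exy /AB_cover/orP[yA|//].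
by move: (AB_no_edge yA xB); rewrite E_sym Exy.
Qed.

Lemma card_AB : (#|A| + #|B|)%N = n.
Proof.
have AB_eq : A :|: B = [set~ v].
  apply/setP => u; rewrite !inE; have [->|/AB_cover //] := eqVneq u v.
  by rewrite (negbTE v_notin_A) (negbTE v_notin_B).
by have := cardsU A B; rewrite AB_eq cardsC1 card_ord disjoint_setI0 // cards0 subn0.
Qed.

Definition cut_enum (s : 'I_(#|A| + #|B|)) : 'I_n.+1 :=
  match split s with inl t => enum_val t | inr t => enum_val t end.

Definition cut_rank (u : 'I_n.+1) : 'I_(#|A| + #|B|) :=
  if u \in A then lshift _ (enum_rank_in i_in_A u) else rshift _ (enum_rank_in j_in_B u).

Lemma cut_enum_neq_v s : cut_enum s != v.
Proof. by rewrite /cut_enum; case: split => t; apply: contraTneq (enum_valP t) => ->. Qed.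

Lemma cut_rankK u : u != v -> cut_enum (cut_rank u) = u.
Proof.
move=> u_neq_v; rewrite /cut_rank /cut_enum; case: ifP => uA.
  by rewrite split_lshift enum_rankK_in.
have uB : u \in B by move: (AB_cover u_neq_v); rewrite uA.
by rewrite split_rshift enum_rankK_in.
Qed.

Lemma cut_enumK : cancel cut_enum cut_rank.
Proof.
move=> s; rewrite /cut_rank /cut_enum -[s in RHS]splitK; case: split => t /=.
  by rewrite enum_valP enum_valK_in.
by rewrite (disjointFl AB_disj (enum_valP t)) enum_valK_in.
Qed.

Let f k := cut_enum (cast_ord (esym card_AB) k).
Let g u := cast_ord card_AB (cut_rank u).
Let fK : cancel f g. Proof. by move=> k; rewrite /f /g cut_enumK cast_ordKV. Qed.
Let gK u : u != v -> f (g u) = u. Proof. by move=> u_neq_v; rewrite /f /g cast_ordK cut_rankK. Qed.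
Let f_neq_v k : f k != v. Proof. exact: cut_enum_neq_v. Qed.

Local Notation U := (reorder_mx f int).
Local Notation U' := (map_mx intr U : 'M[R]_n).
Local Notation QA := (diff_polytope (induced_rel E (v |: A)) (star_label R i_in_A)).
Local Notation QB := (diff_polytope (induced_rel E (v |: B)) (star_label R j_in_B)).

Definition reorder (w : 'rV[R]_n.+1) : 'rV[R]_n := \row_l w 0 (f l).
Definition embA (a : 'rV[R]_#|A|) : 'rV[R]_n := castmx (erefl 1%N, card_AB) (row_mx a 0).
Definition embB (b : 'rV[R]_#|B|) : 'rV[R]_n := castmx (erefl 1%N, card_AB) (row_mx 0 b).

Lemma embA_linear : linear embA.
Proof.
move=> a x y; apply/rowP => l; rewrite !(castmxE, mxE) /= -[cast_ord _ l]splitK.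
by case: split => t /=; rewrite ?row_mxEl ?row_mxEr !mxE ?mulr0 ?addr0.
Qed.

Lemma embB_linear : linear embB.
Proof.
move=> a x y; apply/rowP => l; rewrite !(castmxE, mxE) /= -[cast_ord _ l]splitK.
by case: split => t /=; rewrite ?row_mxEl ?row_mxEr !mxE ?mulr0 ?addr0.
Qed.

Lemma reorder_sigmaA p q : p \in v |: A -> q \in v |: A ->
  reorder (sigma p q) = embA (star_label R i_in_A p - star_label R i_in_A q).
Proof.
move=> pA qA; apply/rowP => l; rewrite castmxE mxE /= /f.
move: (cast_ord _ l) => s; rewrite -[s]splitK; case: (split s) => t /=.
  by rewrite row_mxEl /cut_enum split_lshift !mxE !cast_ord_id !star_labelE.
have not_vA u : u \in v |: A -> (enum_val t == u) = false.
  move=> uA; apply: contraTF uA => /eqP <-.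
  rewrite in_setU1 negb_or (disjointFl AB_disj (enum_valP t)).
  by rewrite andbT; apply: contraTneq (enum_valP t) => ->.
by rewrite row_mxEr /cut_enum split_rshift !mxE !not_vA // andbF subrr.
Qed.

Lemma reorder_sigmaB p q : p \in v |: B -> q \in v |: B ->
  reorder (sigma p q) = embB (star_label R j_in_B p - star_label R j_in_B q).
Proof.
move=> pB qB; apply/rowP => l; rewrite castmxE mxE /= /f.
move: (cast_ord _ l) => s; rewrite -[s]splitK; case: (split s) => t /=; last first.
  by rewrite row_mxEr /cut_enum split_rshift !mxE !cast_ord_id !star_labelE.
have not_vB u : u \in v |: B -> (enum_val t == u) = false.
  move=> uB; apply: contraTF uB => /eqP <-.
  rewrite in_setU1 negb_or (disjointFr AB_disj (enum_valP t)).
  by rewrite andbT; apply: contraTneq (enum_valP t) => ->.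
by rewrite row_mxEl /cut_enum split_lshift !mxE !not_vB // andbF subrr.
Qed.

Lemma edge_side p q : E p q ->
  (p \in v |: A /\ q \in v |: A) \/ (p \in v |: B /\ q \in v |: B).
Proof.
move=> Epq; rewrite !in_setU1.
have [pv|p_neq_v] := eqVneq p v.
  have q_neq_v : q != v by apply: contraTneq Epq => qv; rewrite pv qv E_irr.
  by rewrite /=; case/orP: (AB_cover q_neq_v) => ->; [left | right]; rewrite ?orbT.
have [qv|q_neq_v] := eqVneq q v.
  by rewrite /=; case/orP: (AB_cover p_neq_v) => ->; [left | right]; rewrite ?orbT.
case/orP: (AB_cover p_neq_v) => [pA|pB]; [left | right].
  by rewrite pA (A_closed pA Epq q_neq_v) ?orbT.
by rewrite pB (B_closed pB Epq q_neq_v) ?orbT.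
Qed.

Let image y := exists2 x, P x & y = x *m U'.
Let summands z := (exists2 a, QA a & z = embA a) \/ (exists2 b, QB b & z = embB b).

Lemma reorderE x : x *m U' = reorder (phi x).
Proof. exact: reorder_mxE. Qed.

Lemma reorder_linear : linear reorder.
Proof. by move=> a x y; apply/rowP => l; rewrite !mxE. Qed.

Lemma image_convex : convex_set image.
Proof.
move=> _ _ t t01 [x Px ->] [x' Px' ->]; exists (t *: x + (1 - t) *: x'); last first.
  by rewrite mulmxDl -!scalemxAl.
rewrite /sym_edge_polytope_H phi_linear -[(1 - t) *: x']addr0 phi_linear.
by rewrite (linfun0 (@phi_linear R n)) addr0; apply: convhull_convex.
Qed.

Lemma image_sigma p q : E p q -> image (reorder (sigma p q)).
Proof.
move=> Epq; exists (unphi (sigma p q)); last by rewrite reorderE unphiK ?sum_sigma.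
rewrite /sym_edge_polytope_H unphiK ?sum_sigma //.
by apply: convhull_mem; exists p, q; split=> //; left.
Qed.

Lemma image_eq y : image y <-> convhull summands y.
Proof.
split=> [[x Px ->]|].
  rewrite reorderE; move: (convhull_linear reorder_linear Px).
  apply: convhull_mono => _ [gen [p' [q' [Epq' gen_sigma]]] ->].
  have [p [q [Epq ->]]] : exists p q, E p q /\ gen = sigma p q.
    case: gen_sigma => ->; first by exists p', q'.
    by exists q', p'; rewrite E_sym sigmaN opprK.
  case: (edge_side Epq) => [[pA qA]|[pB qB]]; [left | right].
    by exists (star_label R i_in_A p - star_label R i_in_A q); rewrite ?reorder_sigmaA //;
      apply: diff_polytope_mem; rewrite /induced_rel /= Epq pA qA.
  by exists (star_label R j_in_B p - star_label R j_in_B q); rewrite ?reorder_sigmaB //;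
    apply: diff_polytope_mem; rewrite /induced_rel /= Epq pB qB.
move=> y_hull; apply: (convhull_sub_convex image_convex); move: y_hull; apply: convhull_mono.
move=> _ [[a Qa ->]|[b Qb ->]]; apply: (convhull_sub_convex image_convex).
  move: (convhull_linear embA_linear Qa); apply: convhull_mono => _ [_ [p [q [Gpq ->]]] ->].
  by move: Gpq => /and3P[Epq pA qA]; rewrite -reorder_sigmaA //; apply: image_sigma.
move: (convhull_linear embB_linear Qb); apply: convhull_mono => _ [_ [p [q [Gpq ->]]] ->].
by move: Gpq => /and3P[Epq pB qB]; rewrite -reorder_sigmaB //; apply: image_sigma.
Qed.

Lemma cut_splits : splits P.
Proof.
exists U, #|A|, #|B|, card_AB, QA, QB; split; first exact: (reorder_mx_unimodular fK gK f_neq_v).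
split; first by apply/card_gt0P; exists i.
split; first by apply/card_gt0P; exists j.
split; first exact: (star_polytope_fano R E_sym E_conn v_notin_A i_in_A A_closed).
split; first exact: (star_polytope_fano R E_sym E_conn v_notin_B j_in_B B_closed).
exact: image_eq.
Qed.

End CutVertexSplitting.

Lemma delete_vertex_connect_neq d (E : rel 'I_d) v x z :
  connect (delete_vertex E v) x z -> x != v -> z != v.
Proof. by move: x z; apply: connect_ind => // x y z /and3P[_ _ y_neq_v] IH _; apply: IH. Qed.

Lemma not_two_connected_cut d (E : rel 'I_d) : connected_graph E -> ~ two_connected E ->
  exists v i j, [/\ i != v, j != v & ~ connect (delete_vertex E v) i j].
Proof.
move=> E_conn not_2conn; apply: NNPP => no_cut; apply: not_2conn; split=> // v i j iv jv.
by apply: NNPP => i_sep_j; apply: no_cut; exists v, i, j.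
Qed.

Lemma not_two_connected_splits (R : realType) n (E : rel 'I_n.+1) :
  simple_graph E -> connected_graph E -> ~ two_connected E -> splits (sym_edge_polytope_H (R:=R) E).
Proof.
move=> [E_sym E_irr] E_conn /(not_two_connected_cut E_conn)[v [i [j [i_neq_v j_neq_v i_sep_j]]]].
pose A := [set u | connect (delete_vertex E v) i u].
pose B := [set u | (u != v) && (u \notin A)].
have A_neq_v u : u \in A -> u != v by rewrite inE => /delete_vertex_connect_neq; apply.
apply: (@cut_splits R n E E_sym E_irr E_conn v i j A B).
- by apply/negP => /A_neq_v; rewrite eqxx.
- by rewrite inE eqxx.
- by rewrite disjoints_subset; apply/subsetP => u uA; rewrite in_setC [u \in B]inE uA andbF.
- by move=> u u_neq_v; rewrite [u \in B]inE u_neq_v orbN.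
- by rewrite inE connect0.
- by rewrite inE j_neq_v inE; apply/negP.
move=> x y xA; rewrite inE => /andP[y_neq_v yA]; apply: contra yA => Exy.
have x_neq_v := A_neq_v x xA; move: xA; rewrite !inE => /connect_trans; apply.
by apply: connect1; rewrite /delete_vertex Exy x_neq_v y_neq_v.
Qed.

Theorem lemma3p3 (R : realType) (d : nat) (E : rel 'I_d) :
  (2 <= d)%N -> simple_graph E -> connected_graph E ->
  (~ splits (sym_edge_polytope_H (R:=R) E) <-> two_connected E).
Proof.
case: d E => [|n] E // _ E_simple E_conn; split=> [not_split|E_2conn E_split].
  by apply: NNPP => not_2conn; apply/not_split/not_two_connected_splits.
exact: splits_not_two_connected E_simple E_split E_2conn.
Qed.
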